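(* Let $c>0$, $\lambda>0$, and for $t>0$, $\mathbf{y}\in\mathbb{R}^3$ with $\|\mathbf{y}\|<ct$ let $$p(\mathbf{y},t)=\frac{\lambda}{2c}\frac{1}{\pi(e^{\lambda t}-1)}\sum_{k=0}^{\infty}\left(\frac{\lambda}{2c}\right)^{k+1}\frac{\left(\sqrt{c^2t^2-\|\mathbf{y}\|^2}\right)^{k-1}}{\Gamma(\frac{k+1}{2})\Gamma(\frac{k+3}{2})},$$ the density of the absolutely continuous component of the law of the three-dimensional random flight $\mathbf{Y}_3(t)$ described in the context. Then $u=p$ satisfies, in $\{(\mathbf{y},t):t>0,\|\mathbf{y}\|<ct\}$, the non-homogeneous telegraph-type equation with variable coefficients $$\left(\frac{\partial^2}{\partial t^2}+c_1(t)\frac{\partial}{\partial t}-c^2\Delta\right)u(\mathbf{y},t)=c_2(t)u(\mathbf{y},t)+c_3(\mathbf{y},t),$$ where $\Delta=\sum_{j=1}^3\partial^2/\partial y_j^2$ and $$c_1(t)=\frac{2\lambda e^{\lambda t}}{e^{\lambda t}-1},\qquad c_2(t)=-\frac{\lambda^2}{e^{\lambda t}-1},\qquad c_3(\mathbf{y},t)=\frac{\lambda^2}{\sqrt{\pi^3}(e^{\lambda t}-1)}\frac{(c^2t^2-\|\mathbf{y}\|^2)^{-3/2}}{\Gamma(-\frac12)}.$$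
   Context: The random flight $\mathbf{Y}_3(t)$ in $\mathbb{R}^3$: a particle starts at the origin, moves at constant speed $c$, with independent uniformly distributed directions on $S^2$ for successive segments; given $\mathcal{N}_3(t)=k$ changes of direction in $(0,t)$, the segment durations $(\tau_1,\dots,\tau_{k+1})$, $\sum\tau_j=t$, have the rescaled Dirichlet law with all parameters $1/2$, and $P\{\mathcal{N}_3(t)=k\}=\frac{1}{E_{1,2}(\lambda t)}\frac{(\lambda t)^k}{(k+1)!}=\frac{(\lambda t)^{k+1}}{(e^{\lambda t}-1)(k+1)!}$. The function $p$ above is the density of the absolutely continuous part of the law of $\mathbf{Y}_3(t)$. *)

From Stdlib Require Import Reals ZArith.
From Coquelicot Require Import Coquelicot.
Open Scope R_scope.

Definition Gamma_pos (x : R) : R :=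
  RInt_gen (fun s => Rpower s (x - 1) * exp (- s)) (at_right 0) (Rbar_locally p_infty).

Fixpoint poch (x : R) (n : nat) : R :=
  match n with
  | O => 1
  | S m => poch x m * (x + INR m)
  end.

(* Standard analytic continuation via the functional equation:
   Gamma x = Gamma (x+n) / (x (x+1) ... (x+n-1)) with n the least natural
   making x+n > 0 (n = 0 when x > 0). *)
Definition Gamma (x : R) : R :=
  let n := Z.to_nat (up (- x)) in Gamma_pos (x + INR n) / poch x n.

Definition norm3 (y1 y2 y3 : R) : R := sqrt (y1 ^ 2 + y2 ^ 2 + y3 ^ 2).

Definition p_dens (c lam : R) (y1 y2 y3 t : R) : R :=
  lam / (2 * c) * (1 / (PI * (exp (lam * t) - 1))) *
  Series (fun k : nat =>
    (lam / (2 * c)) ^ (k + 1) *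
    Rpower (sqrt (c ^ 2 * t ^ 2 - (norm3 y1 y2 y3) ^ 2)) (INR k - 1) /
    (Gamma ((INR k + 1) / 2) * Gamma ((INR k + 3) / 2))).

Definition coef1 (lam t : R) : R := 2 * lam * exp (lam * t) / (exp (lam * t) - 1).
Definition coef2 (lam t : R) : R := - (lam ^ 2 / (exp (lam * t) - 1)).
Definition coef3 (c lam : R) (y1 y2 y3 t : R) : R :=
  lam ^ 2 / (sqrt (PI ^ 3) * (exp (lam * t) - 1)) *
  (Rpower (c ^ 2 * t ^ 2 - (norm3 y1 y2 y3) ^ 2) (- (3 / 2)) / Gamma (- (1 / 2))).

Definition twice_derivable (f : R -> R) (x : R) : Prop :=
  ex_derive f x /\ ex_derive (fun s => Derive f s) x.
Definition D2 (f : R -> R) (x : R) : R := Derive (fun s => Derive f s) x.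

From Stdlib Require Import Reals ZArith Lra Lia.
From Coquelicot Require Import Coquelicot.
Open Scope R_scope.

(* Write [a = lam / (2 c)] and [w = c^2 t^2 - |y|^2]. Once Gamma is evaluated at the
   half-integers (Gamma (1/2) = sqrt pi via the Gaussian integral, Gamma 1 = 1, and
   Gamma (x + 1) = x Gamma x by parts), the density becomes
   [p = a / (pi (e^(lam t) - 1)) * Q w] with [Q w = P (sqrt w) / sqrt w] and [P] an entire
   power series whose coefficients satisfy [(k+1)(k+3) b_(k+2) = 4 a^2 b_k]. This recurrence
   is the ODE [r^2 P'' + r P' - P = 4 a^2 r^2 P - b_0], equivalently
   [w Q'' + 2 Q' = a^2 Q - b_0 / (4 w^(3/2))].  Since [p] depends on [y] only through [w],
   after subtracting [c_2 p] every term carrying a derivative of the time factor cancels and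
   what remains is the time factor times [4 c^2 (w Q'' + 2 Q') - lam^2 Q]; as
   [4 c^2 a^2 = lam^2] the ODE reduces this to [- c^2 b_0 / w^(3/2)] times the time factor,
   which is [c_3] because [b_0 = 2 a / pi]. *)

(* Coquelicot's [plus], [mult] and [scal] on [R] reduce to the real operations, but [ring]
   only accepts an equation whose type is syntactically [R]. *)
Ltac goal_in_R := match goal with |- ?a = ?b => change (@eq R a b) end.

Lemma is_derive_0_constant (f : R -> R) :
  (forall x, is_derive f x 0) -> forall x y, f x = f y.
Proof.
  intros Hf x y.
  destruct (MVT_cor4 f (fun _ => 0) x (Rabs (y - x)) (fun z _ => Hf z) y (Rle_refl _))
    as [z [Hz _]].
  lra.
Qed.

Lemma exp_le_compat x y : x <= y -> exp x <= exp y.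
Proof. intros [H | ->]; [apply Rlt_le, exp_increasing, H | apply Rle_refl]. Qed.

Lemma continuous_of_ex_derive (f : R -> R) x : ex_derive f x -> continuous f x.
Proof. apply (@ex_derive_continuous R_AbsRing R_NormedModule). Qed.

Lemma ex_RInt_of_continuous (f : R -> R) a b :
  (forall x, continuous f x) -> ex_RInt f a b.
Proof. intros Hf. apply (@ex_RInt_continuous R_CompleteNormedModule). intros x _; apply Hf. Qed.

(** * The Gaussian integral *)

Definition gauss (t : R) : R := exp (- (t * t)).
Definition gauss_int (x : R) : R := RInt gauss 0 x.

Lemma continuous_gauss x : continuous gauss x.
Proof. apply continuous_of_ex_derive. unfold gauss. auto_derive. easy. Qed.

Lemma is_derive_gauss_int x : is_derive gauss_int x (gauss x).
Proof.
  apply (is_derive_RInt gauss _ 0); [|apply continuous_gauss].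
  apply filter_forall. intros y.
  apply (@RInt_correct R_CompleteNormedModule), ex_RInt_of_continuous, continuous_gauss.
Qed.

Lemma gauss_int_ge0 x : 0 <= x -> 0 <= gauss_int x.
Proof.
  intros Hx. apply RInt_ge_0; [lra | apply ex_RInt_of_continuous, continuous_gauss |].
  intros t _. apply Rlt_le, exp_pos.
Qed.

(* Feynman's trick: [gauss_int x ^ 2 + gauss_aux x] has zero derivative. *)
Definition gauss_aux_integrand (x t : R) : R :=
  exp (- (x * x) * (1 + t * t)) / (1 + t * t).
Definition gauss_aux (x : R) : R := RInt (gauss_aux_integrand x) 0 1.

Lemma continuous_gauss_aux_integrand x t : continuous (gauss_aux_integrand x) t.
Proof.
  apply continuous_of_ex_derive. unfold gauss_aux_integrand. auto_derive. nra.
Qed.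

Lemma is_derive_gauss_aux_integrand x t :
  is_derive (fun y => gauss_aux_integrand y t) x (-2 * x * exp (- (x * x) * (1 + t * t))).
Proof. unfold gauss_aux_integrand. auto_derive; [nra | field; nra]. Qed.

Lemma is_derive_gauss_aux x : is_derive gauss_aux x (-2 * gauss x * gauss_int x).
Proof.
  set (dI := fun y t => -2 * y * exp (- (y * y) * (1 + t * t))).
  assert (HdI : forall y t, Derive (fun z => gauss_aux_integrand z t) y = dI y t).
  { intros y t. apply is_derive_unique, is_derive_gauss_aux_integrand. }
  assert (Hparam : is_derive gauss_aux x (RInt (dI x) 0 1)).
  { rewrite <- (RInt_ext (fun t => Derive (fun z => gauss_aux_integrand z t) x))
      by (intros; apply HdI).
    apply (is_derive_RInt_param gauss_aux_integrand).
    - apply filter_forall. intros y t _. eexists. apply is_derive_gauss_aux_integrand.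
    - intros t _. apply (continuity_2d_pt_ext dI); [intros; symmetry; apply HdI |].
      unfold dI.
      repeat first [ apply continuity_2d_pt_mult | apply continuity_2d_pt_plus
                   | apply continuity_2d_pt_opp | apply continuity_2d_pt_const
                   | apply continuity_2d_pt_id1 | apply continuity_2d_pt_id2
                   | apply continuity_1d_2d_pt_comp;
                     [apply derivable_continuous_pt, derivable_pt_exp |] ].
    - apply filter_forall. intros y.
      apply ex_RInt_of_continuous, continuous_gauss_aux_integrand. }
  (* substituting [u = x t] turns [RInt (dI x) 0 1] into a multiple of [gauss_int x] *)
  replace (-2 * gauss x * gauss_int x) with (RInt (dI x) 0 1); [exact Hparam |].
  rewrite (RInt_ext _ (fun t => scal (-2 * gauss x) (scal x (gauss (x * t + 0))))).
  2:{ intros t _. unfold dI, gauss, scal; simpl; unfold mult; simpl.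
      replace (- (x * x) * (1 + t * t)) with (- (x * x) + - ((x * t + 0) * (x * t + 0)))
        by ring.
      rewrite exp_plus. goal_in_R. ring. }
  rewrite (@RInt_scal R_CompleteNormedModule), (@RInt_comp_lin R_CompleteNormedModule).
  - unfold gauss_int, scal; simpl; unfold mult; simpl.
    f_equal. f_equal; goal_in_R; ring.
  - apply ex_RInt_of_continuous, continuous_gauss.
  - apply ex_RInt_of_continuous. intros t. apply continuous_of_ex_derive.
    unfold gauss, scal; simpl; unfold mult; simpl. auto_derive. easy.
Qed.

Lemma gauss_aux_0 : gauss_aux 0 = PI / 4.
Proof.
  unfold gauss_aux.
  rewrite (RInt_ext (V := R_CompleteNormedModule) _ (fun t => / (1 + t * t))).
  2:{ intros t _. unfold gauss_aux_integrand.
      replace (- (0 * 0) * (1 + t * t)) with 0 by ring.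
      rewrite exp_0. goal_in_R. unfold Rdiv. ring. }
  replace (PI / 4) with (atan 1 - atan 0) by (rewrite atan_1, atan_0; lra).
  apply is_RInt_unique, (@is_RInt_derive R_CompleteNormedModule atan).
  - intros y _. apply is_derive_Reals.
    replace (/ (1 + y * y)) with (/ (1 + y ^ 2)) by (f_equal; ring).
    apply derivable_pt_lim_atan.
  - intros y _. apply continuous_of_ex_derive. auto_derive. nra.
Qed.

Lemma gauss_int_sqr x : gauss_int x ^ 2 = PI / 4 - gauss_aux x.
Proof.
  set (h := fun y => gauss_int y ^ 2 + gauss_aux y).
  assert (Hh : forall y, is_derive h y 0).
  { intros y. unfold h.
    replace 0 with (INR 2 * gauss y * gauss_int y ^ 1 + -2 * gauss y * gauss_int y)
      by (simpl; ring).
    apply (@is_derive_plus R_AbsRing R_NormedModule);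
      [apply is_derive_pow, is_derive_gauss_int | apply is_derive_gauss_aux]. }
  assert (H0 := is_derive_0_constant h Hh x 0). unfold h in H0.
  rewrite gauss_aux_0 in H0. unfold gauss_int at 2 in H0. rewrite RInt_point in H0.
  unfold zero in H0; simpl in H0. lra.
Qed.

Lemma gauss_aux_bounds x : 0 <= gauss_aux x <= gauss x.
Proof.
  assert (Hex : ex_RInt (gauss_aux_integrand x) 0 1)
    by apply ex_RInt_of_continuous, continuous_gauss_aux_integrand.
  assert (Hint : forall t, 0 <= gauss_aux_integrand x t <= gauss x).
  { intros t. unfold gauss_aux_integrand, gauss.
    assert (H1 : 1 <= 1 + t * t) by nra.
    assert (H2 : exp (- (x * x) * (1 + t * t)) <= exp (- (x * x))).
    { apply exp_le_compat. nra. }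
    split; [apply Rle_mult_inv_pos; [apply Rlt_le, exp_pos | lra] |].
    apply Rle_trans with (2 := H2). unfold Rdiv.
    rewrite <- (Rmult_1_r (exp _)) at 2. apply Rmult_le_compat_l; [apply Rlt_le, exp_pos |].
    rewrite <- Rinv_1. apply Rinv_le_contravar; lra. }
  unfold gauss_aux. split.
  - apply RInt_ge_0; [lra | exact Hex | intros t _; apply Hint].
  - replace (gauss x) with (RInt (fun _ => gauss x) 0 1)
      by (rewrite RInt_const; unfold scal; simpl; unfold mult; simpl; ring).
    apply RInt_le; [lra | exact Hex | apply ex_RInt_const | intros t _; apply Hint].
Qed.

Lemma gauss_int_limit_bound x :
  0 <= x -> Rabs (gauss_int x - sqrt PI / 2) <= 2 * gauss x / sqrt PI.
Proof.
  intros Hx.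
  assert (HP : 0 < sqrt PI) by (apply sqrt_lt_R0, PI_RGT_0).
  assert (HP2 : sqrt PI * sqrt PI = PI) by (apply sqrt_sqrt; generalize PI_RGT_0; lra).
  generalize (gauss_int_sqr x) (gauss_aux_bounds x) (gauss_int_ge0 x Hx).
  intros Hsq [Hu0 Hu1] He.
  set (e := gauss_int x) in *. set (s := sqrt PI) in *.
  (* [e - s/2 = - gauss_aux x / (e + s/2)] and [e + s/2 >= s/2] *)
  replace (e - s / 2) with (- gauss_aux x / (e + s / 2)) by (field_simplify_eq; nra).
  rewrite Rabs_div, Rabs_Ropp, !Rabs_pos_eq by lra.
  apply Rle_trans with (gauss_aux x / (s / 2)).
  - unfold Rdiv. apply Rmult_le_compat_l; [lra | apply Rinv_le_contravar; lra].
  - replace (2 * gauss x / s) with (gauss x / (s / 2)) by (field; lra).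
    unfold Rdiv. apply Rmult_le_compat_r; [apply Rlt_le, Rinv_0_lt_compat |]; lra.
Qed.

(** * Gamma at half-integers *)

Local Notation infty := (Rbar_locally p_infty).

Lemma filter_prod_pos (P : R -> Prop) :
  (forall x, 0 < x -> P x) ->
  filter_prod (at_right 0) infty
    (fun ab : R * R => forall x, Rmin (fst ab) (snd ab) <= x <= Rmax (fst ab) (snd ab) -> P x).
Proof.
  intros HP. apply Filter_prod with (fun a => 0 < a) (fun b => 0 < b).
  - exists (mkposreal 1 Rlt_0_1). intros y _ Hy. exact Hy.
  - exists 0. intros y Hy. exact Hy.
  - intros a b Ha Hb x Hx. apply HP. simpl in Hx.
    assert (0 < Rmin a b) by (apply Rmin_glb_lt; lra). lra.
Qed.

Lemma filter_prod_pos_open (P : R -> Prop) :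
  (forall x, 0 < x -> P x) ->
  filter_prod (at_right 0) infty
    (fun ab : R * R => forall x, Rmin (fst ab) (snd ab) < x < Rmax (fst ab) (snd ab) -> P x).
Proof.
  intros HP. generalize (filter_prod_pos P HP). apply filter_imp.
  intros ab H x Hx. apply H. lra.
Qed.

Lemma is_RInt_gen_antiderivative (F f : R -> R) la lb :
  (forall x, 0 < x -> is_derive F x (f x)) -> (forall x, 0 < x -> continuous f x) ->
  filterlim F (at_right 0) (locally la) -> filterlim F infty (locally lb) ->
  is_RInt_gen f (at_right 0) infty (lb - la).
Proof.
  intros HD HC Ha Hb.
  assert (HDf : forall x, 0 < x -> Derive F x = f x) by (intros; apply is_derive_unique, HD; lra).
  apply (is_RInt_gen_ext (Derive F)); [apply filter_prod_pos_open, HDf |].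
  apply is_RInt_gen_Derive; auto.
  - apply filter_prod_pos. intros x Hx. eexists; apply HD, Hx.
  - apply filter_prod_pos. intros x Hx.
    apply (@continuous_ext_loc R_UniformSpace R_UniformSpace _ f); [| apply HC, Hx].
    exists (mkposreal x Hx). intros y Hy. symmetry. apply HDf.
    assert (H : Rabs (y - x) < x) by exact Hy. apply Rabs_lt_between in H. lra.
Qed.

Lemma filterlim_at_right_0_continuous (F : R -> R) :
  continuous F 0 -> filterlim F (at_right 0) (locally (F 0)).
Proof.
  intros H. apply (filterlim_filter_le_1 (F := locally 0)); [apply filter_le_within | exact H].
Qed.

Lemma filterlim_infty_exp_bound (F : R -> R) l M :
  (forall s, 0 < s -> Rabs (F s - l) <= M * exp (- s)) -> filterlim F infty (locally l).
Proof.
  intros HF. apply filterlim_locally. intros eps.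
  assert (HM : 0 < Rabs M + 1) by (generalize (Rabs_pos M); lra).
  set (d := eps / (Rabs M + 1)).
  assert (Hd : 0 < d) by (apply Rdiv_lt_0_compat; [apply cond_pos | exact HM]).
  exists (Rmax 0 (- ln d)). intros s Hs.
  assert (Hs0 : 0 < s) by (generalize (Rmax_l 0 (- ln d)); lra).
  assert (He : exp (- s) < d).
  { rewrite <- (exp_ln d Hd). apply exp_increasing. generalize (Rmax_r 0 (- ln d)); lra. }
  change (Rabs (F s - l) < eps).
  apply Rle_lt_trans with (1 := HF s Hs0).
  apply Rle_lt_trans with ((Rabs M + 1) * exp (- s)).
  - apply Rmult_le_compat_r; [apply Rlt_le, exp_pos | generalize (Rle_abs M); lra].
  - replace (pos eps) with ((Rabs M + 1) * d) by (unfold d; field; lra).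
    apply Rmult_lt_compat_l; assumption.
Qed.

Lemma is_derive_Rpower x s : 0 < s -> is_derive (fun y => Rpower y x) s (x * Rpower s (x - 1)).
Proof. intros Hs. apply is_derive_Reals, derivable_pt_lim_power, Hs. Qed.

Lemma Derive_Rpower x s : 0 < s -> Derive (fun y => Rpower y x) s = x * Rpower s (x - 1).
Proof. intros Hs. apply is_derive_unique, is_derive_Rpower, Hs. Qed.

Lemma Rpower_exp_lim_0 x :
  0 < x -> filterlim (fun s => Rpower s x * exp (- s)) (at_right 0) (locally 0).
Proof.
  intros Hx. apply filterlim_locally. intros eps.
  exists (mkposreal (Rpower eps (/ x)) (exp_pos _)). simpl. intros s Hs Hs0.
  assert (Hlt : s < Rpower eps (/ x)).
  { assert (H : Rabs (s - 0) < Rpower eps (/ x)) by exact Hs.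
    apply Rabs_lt_between in H. lra. }
  change (Rabs (Rpower s x * exp (- s) - 0) < eps).
  rewrite Rminus_0_r, Rabs_pos_eq by (apply Rlt_le, Rmult_lt_0_compat; apply exp_pos).
  assert (H1 : Rpower s x < eps).
  { replace (pos eps) with (Rpower (Rpower eps (/ x)) x)
      by (rewrite Rpower_mult, Rinv_l by lra; apply Rpower_1, cond_pos).
    apply Rlt_Rpower_l; lra. }
  assert (H2 : exp (- s) <= 1) by (rewrite <- exp_0; apply exp_le_compat; lra).
  assert (0 < Rpower s x) by apply exp_pos. nra.
Qed.

Lemma Rpower_exp_lim_infty x :
  0 < x -> filterlim (fun s => Rpower s x * exp (- s)) infty (locally 0).
Proof.
  intros Hx. apply filterlim_locally. intros eps.
  set (L := Rabs (ln eps)). assert (HL : 0 <= L) by apply Rabs_pos.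
  set (K := 2 * x + L + 1).
  exists (K * K). intros s Hs.
  assert (Hs0 : 0 < s) by (unfold K in Hs; nra).
  change (Rabs (Rpower s x * exp (- s) - 0) < eps).
  rewrite Rminus_0_r, Rabs_pos_eq by (apply Rlt_le, Rmult_lt_0_compat; apply exp_pos).
  (* with [q = sqrt s]: [x ln s - s = 2 x ln q - q^2 <= q (2 x - q) <= - (L + 1) < ln eps] *)
  set (q := sqrt s). assert (Hq : q * q = s) by (apply sqrt_sqrt; lra).
  assert (Hq0 : 0 < q) by (apply sqrt_lt_R0; lra).
  assert (HqK : K < q) by (unfold K in *; nra).
  assert (Hlnq : ln q < q).
  { generalize (exp_ineq1_le (ln q)). rewrite exp_ln by exact Hq0. lra. }
  assert (Hbound : q * (2 * x - q) <= - (L + 1)) by (unfold K in HqK; nra).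
  assert (Heps : - L <= ln eps)
    by (generalize (Rle_abs (- ln eps)); rewrite Rabs_Ropp; fold L; lra).
  unfold Rpower. rewrite <- exp_plus, <- (exp_ln eps) by apply cond_pos.
  apply exp_increasing. rewrite <- Hq, ln_mult by lra. nra.
Qed.

Definition gamma_integrand (x s : R) : R := Rpower s (x - 1) * exp (- s).

Lemma is_RInt_gen_gamma_half :
  is_RInt_gen (gamma_integrand (1 / 2)) (at_right 0) infty (sqrt PI).
Proof.
  assert (HP : 0 < sqrt PI) by apply sqrt_lt_R0, PI_RGT_0.
  set (A := fun s => 2 * gauss_int (sqrt s)).
  apply (is_RInt_gen_ext (fun s => exp (- s) / sqrt s)).
  { apply filter_prod_pos_open. intros s Hs. unfold gamma_integrand.
    replace (1 / 2 - 1) with (- / 2) by field.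
    rewrite Rpower_Ropp, Rpower_sqrt by exact Hs. unfold Rdiv. goal_in_R. ring. }
  replace (sqrt PI) with (sqrt PI - A 0)
    by (unfold A, gauss_int; rewrite sqrt_0, RInt_point; unfold zero; simpl; ring).
  apply (is_RInt_gen_antiderivative A).
  - intros s Hs. unfold A. assert (Hq : 0 < sqrt s) by apply sqrt_lt_R0, Hs.
    replace (exp (- s) / sqrt s) with (2 * (/ (2 * sqrt s) * gauss (sqrt s)))
      by (unfold gauss; rewrite sqrt_sqrt by lra; field; lra).
    apply (is_derive_scal (fun s => gauss_int (sqrt s))).
    apply (is_derive_comp gauss_int sqrt); [apply is_derive_gauss_int |].
    apply is_derive_Reals, derivable_pt_lim_sqrt, Hs.
  - intros s Hs. apply continuous_of_ex_derive. auto_derive.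
    assert (0 < sqrt s) by apply sqrt_lt_R0, Hs. repeat split; lra.
  - apply filterlim_at_right_0_continuous.
    apply (continuous_comp sqrt (fun y => 2 * gauss_int y)).
    + apply continuity_pt_filterlim, continuity_pt_sqrt. lra.
    + apply continuous_of_ex_derive. eexists. apply is_derive_scal, is_derive_gauss_int.
  - apply (filterlim_infty_exp_bound A _ (4 / sqrt PI)). intros s Hs.
    unfold A. replace (2 * gauss_int (sqrt s) - sqrt PI)
      with (2 * (gauss_int (sqrt s) - sqrt PI / 2)) by field.
    rewrite Rabs_mult, Rabs_pos_eq by lra.
    generalize (gauss_int_limit_bound (sqrt s) (sqrt_pos s)).
    unfold gauss. rewrite sqrt_sqrt by lra. intros H.
    replace (4 / sqrt PI * exp (- s)) with (2 * (2 * exp (- s) / sqrt PI)) by (field; lra).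
    lra.
Qed.

Lemma is_RInt_gen_gamma_1 : is_RInt_gen (gamma_integrand 1) (at_right 0) infty 1.
Proof.
  set (F := fun s => - exp (- s)).
  apply (is_RInt_gen_ext (fun s => exp (- s))).
  { apply filter_prod_pos_open. intros s Hs. unfold gamma_integrand.
    replace (1 - 1) with 0 by ring. rewrite Rpower_O by exact Hs. goal_in_R. ring. }
  replace 1 with (0 - F 0) by (unfold F; rewrite Ropp_0, exp_0; ring).
  apply (is_RInt_gen_antiderivative F).
  - intros s _. unfold F. auto_derive; [easy | ring].
  - intros s _. apply continuous_of_ex_derive. auto_derive. easy.
  - apply filterlim_at_right_0_continuous, continuous_of_ex_derive.
    unfold F. auto_derive. easy.
  - apply (filterlim_infty_exp_bound F _ 1). intros s _. unfold F.
    rewrite Rminus_0_r, Rabs_Ropp, Rabs_pos_eq by apply Rlt_le, exp_pos. lra.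
Qed.

(* Integration by parts against [- s^x e^(-s)], whose boundary values vanish. *)
Lemma is_RInt_gen_gamma_succ x l :
  0 < x -> is_RInt_gen (gamma_integrand x) (at_right 0) infty l ->
  is_RInt_gen (gamma_integrand (x + 1)) (at_right 0) infty (x * l).
Proof.
  intros Hx Hl.
  set (F := fun s => - (Rpower s x * exp (- s))).
  set (dF := fun s => Rpower s x * exp (- s) - x * gamma_integrand x s).
  assert (HF : forall s, 0 < s -> is_derive F s (dF s)).
  { intros s Hs. unfold F, dF, gamma_integrand. auto_derive.
    - eexists. apply is_derive_Rpower, Hs.
    - rewrite Derive_Rpower by exact Hs. ring. }
  apply (is_RInt_gen_ext (fun s => plus (dF s) (scal x (gamma_integrand x s)))).
  { apply filter_prod_pos_open. intros s Hs. unfold dF, gamma_integrand, plus, scal.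
    simpl. unfold mult. simpl. replace (x + 1 - 1) with x by ring. goal_in_R. ring. }
  replace (x * l) with (plus (0 - 0) (scal x l))
    by (unfold plus, scal; simpl; unfold mult; simpl; goal_in_R; ring).
  apply (@is_RInt_gen_plus R_NormedModule (at_right 0) infty _ _ dF
           (fun s => scal x (gamma_integrand x s)) (0 - 0) (scal x l)).
  2: exact (@is_RInt_gen_scal R_NormedModule (at_right 0) infty _ _ _ x l Hl).
  apply (is_RInt_gen_antiderivative F); [exact HF | | |].
  - intros s Hs. apply continuous_of_ex_derive. unfold dF, gamma_integrand. auto_derive.
    repeat split; eexists; apply is_derive_Rpower, Hs.
  - apply (filterlim_comp _ _ _ (fun s => Rpower s x * exp (- s)) Ropp _ (locally 0));
      [apply Rpower_exp_lim_0, Hx | rewrite <- Ropp_0 at 2; apply (filterlim_opp 0)].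
  - apply (filterlim_comp _ _ _ (fun s => Rpower s x * exp (- s)) Ropp _ (locally 0));
      [apply Rpower_exp_lim_infty, Hx | rewrite <- Ropp_0 at 2; apply (filterlim_opp 0)].
Qed.

Lemma nat_ind2 (P : nat -> Prop) :
  P 0%nat -> P 1%nat -> (forall n, P n -> P (S (S n))) -> forall n, P n.
Proof.
  intros H0 H1 HS n. enough (H : P n /\ P (S n)) by apply H.
  induction n as [|n [IH1 IH2]]; split; auto.
Qed.

(* [gamma_half_int k] is the value of Gamma at [(k + 1) / 2]. *)
Fixpoint gamma_half_int (k : nat) : R :=
  match k with
  | O => sqrt PI
  | S O => 1
  | S (S m) => (INR m + 1) / 2 * gamma_half_int m
  end.

Lemma gamma_half_int_pos k : 0 < gamma_half_int k.
Proof.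
  induction k as [| | k IH] using nat_ind2.
  - apply sqrt_lt_R0, PI_RGT_0.
  - apply Rlt_0_1.
  - apply Rmult_lt_0_compat; [generalize (pos_INR k); lra | exact IH].
Qed.

Lemma is_RInt_gen_gamma_half_int k :
  is_RInt_gen (gamma_integrand ((INR k + 1) / 2)) (at_right 0) infty (gamma_half_int k).
Proof.
  induction k as [| | k IH] using nat_ind2.
  - replace ((INR 0 + 1) / 2) with (1 / 2) by (simpl; field). apply is_RInt_gen_gamma_half.
  - replace ((INR 1 + 1) / 2) with 1 by (simpl; field). apply is_RInt_gen_gamma_1.
  - change (gamma_half_int (S (S k))) with ((INR k + 1) / 2 * gamma_half_int k).
    replace ((INR (S (S k)) + 1) / 2) with ((INR k + 1) / 2 + 1) by (rewrite !S_INR; field).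
    apply is_RInt_gen_gamma_succ; [generalize (pos_INR k); lra | exact IH].
Qed.

Lemma Gamma_pos_half_int k : Gamma_pos ((INR k + 1) / 2) = gamma_half_int k.
Proof.
  unfold Gamma_pos. apply (is_RInt_gen_unique (V := R_CompleteNormedModule)).
  apply is_RInt_gen_gamma_half_int.
Qed.

Lemma Gamma_of_pos x : 0 < x -> Gamma x = Gamma_pos x.
Proof.
  intros Hx. unfold Gamma.
  destruct (archimed (- x)) as [_ Hup].
  assert (Hu : (up (- x) <= 0)%Z).
  { apply Z.lt_succ_r, lt_IZR. rewrite succ_IZR. simpl. lra. }
  replace (Z.to_nat (up (- x))) with O by lia.
  simpl. rewrite Rplus_0_r. field.
Qed.

Lemma Gamma_half_int k : Gamma ((INR k + 1) / 2) = gamma_half_int k.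
Proof.
  rewrite Gamma_of_pos by (generalize (pos_INR k); lra). apply Gamma_pos_half_int.
Qed.

Lemma Gamma_neg_half : Gamma (- (1 / 2)) = -2 * sqrt PI.
Proof.
  unfold Gamma.
  replace (up (- - (1 / 2))) with 1%Z by (apply tech_up; simpl; lra).
  replace (- (1 / 2) + INR (Z.to_nat 1)) with ((INR 0 + 1) / 2) by (simpl; field).
  rewrite Gamma_pos_half_int. simpl. field.
Qed.

(** * The coefficient series *)

(* The series coefficients of [p]: [p_dens] is [sum_k p_coef a k * w^((k-1)/2)] up to a
   factor depending only on [t], where [a = lam / (2 c)] and [w = c^2 t^2 - |y|^2]. *)
Definition p_coef (a : R) (k : nat) : R :=
  a ^ (k + 1) / (gamma_half_int k * gamma_half_int (S (S k))).

Lemma p_coef_0 a : p_coef a 0 = 2 * a / PI.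
Proof.
  unfold p_coef. change (gamma_half_int 2) with ((0 + 1) / 2 * sqrt PI).
  change (gamma_half_int 0) with (sqrt PI). change (a ^ (0 + 1)) with (a ^ 1).
  assert (HP : 0 < sqrt PI) by apply sqrt_lt_R0, PI_RGT_0.
  replace (2 * a / PI) with (2 * a / (sqrt PI * sqrt PI))
    by (rewrite sqrt_sqrt by (generalize PI_RGT_0; lra); reflexivity).
  field. lra.
Qed.

Lemma p_coef_rec a k :
  (INR k + 1) * (INR k + 3) * p_coef a (S (S k)) = 4 * a ^ 2 * p_coef a k.
Proof.
  unfold p_coef.
  change (gamma_half_int (S (S (S (S k)))))
    with ((INR (S (S k)) + 1) / 2 * gamma_half_int (S (S k))).
  change (gamma_half_int (S (S k))) with ((INR k + 1) / 2 * gamma_half_int k).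
  replace (S (S k) + 1)%nat with (S (S (k + 1))) by lia.
  rewrite !S_INR. cbn [pow].
  generalize (gamma_half_int_pos k) (pos_INR k); intros. field. lra.
Qed.

Lemma pow_div_fact_le_exp y n : 0 <= y -> y ^ n / INR (fact n) <= exp y.
Proof.
  intros Hy. apply Rle_trans with (2 := exp_ge_taylor y n Hy).
  assert (Hnn : forall k, 0 <= y ^ k / INR (fact k))
    by (intros k; apply Rle_mult_inv_pos; [apply pow_le, Hy | apply lt_0_INR, lt_O_fact]).
  destruct n as [|n]; [apply Rle_refl |].
  cbn [sum_f_R0]. generalize (cond_pos_sum _ n Hnn). lra.
Qed.

Lemma CV_radius_infinite_of_fact_bound (b : nat -> R) M C :
  (forall n, Rabs (b n) <= M * C ^ n / INR (fact n)) ->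
  forall x, Rbar_lt (Rabs x) (CV_radius b).
Proof.
  intros Hb x. set (r := Rabs x + 1).
  assert (Hr : 0 <= r) by (unfold r; generalize (Rabs_pos x); lra).
  assert (Hle : Rbar_le r (CV_radius b)).
  { apply (proj1 (CV_radius_bounded b)).
    exists (Rabs M * exp (Rabs C * r)). intros n.
    rewrite Rabs_mult, <- RPow_abs, (Rabs_pos_eq r Hr).
    assert (Hf : 0 <= r ^ n / INR (fact n))
      by (apply Rle_mult_inv_pos; [apply pow_le, Hr | apply INR_fact_lt_0]).
    apply Rle_trans with (Rabs M * ((Rabs C * r) ^ n / INR (fact n))).
    - apply Rle_trans with (M * C ^ n * (r ^ n / INR (fact n))).
      + replace (M * C ^ n * (r ^ n / INR (fact n))) with (M * C ^ n / INR (fact n) * r ^ n)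
          by (field; apply INR_fact_neq_0).
        apply Rmult_le_compat_r; [apply pow_le, Hr | apply Hb].
      + replace (Rabs M * ((Rabs C * r) ^ n / INR (fact n)))
          with (Rabs M * Rabs C ^ n * (r ^ n / INR (fact n)))
          by (rewrite Rpow_mult_distr; field; apply INR_fact_neq_0).
        apply Rmult_le_compat_r; [exact Hf |].
        rewrite RPow_abs, <- Rabs_mult. apply Rle_abs.
    - apply Rmult_le_compat_l; [apply Rabs_pos |].
      apply pow_div_fact_le_exp. apply Rmult_le_pos; [apply Rabs_pos | exact Hr]. }
  destruct (CV_radius b) as [R0| |]; simpl in *; unfold r in Hle; lra || auto.
Qed.

Lemma le_max_of_step2_nonincreasing (u : nat -> R) :
  (forall n, u (S (S n)) <= u n) -> forall n, u n <= Rmax (u 0%nat) (u 1%nat).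
Proof.
  intros Hu n. induction n as [| | n IH] using nat_ind2;
    [apply Rmax_l | apply Rmax_r | eapply Rle_trans; [apply Hu | exact IH]].
Qed.

(* [p_coef a k * k! / (2a)^k] is nonincreasing along each parity class. *)
Lemma p_coef_fact_bound a : 0 < a ->
  exists M, forall n, Rabs (p_coef a n) <= M * (2 * a) ^ n / INR (fact n).
Proof.
  intros Ha.
  set (d := fun n => p_coef a n * INR (fact n) / (2 * a) ^ n).
  assert (Hpos : forall n, 0 < p_coef a n).
  { intros n. apply Rdiv_lt_0_compat; [apply pow_lt, Ha |].
    apply Rmult_lt_0_compat; apply gamma_half_int_pos. }
  assert (Hd : forall n, d (S (S n)) <= d n).
  { intros n. assert (Hk := pos_INR n).
    assert (Hdn : 0 < d n).
    { apply Rdiv_lt_0_compat; [apply Rmult_lt_0_compat; [apply Hpos | apply INR_fact_lt_0] |].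
      apply pow_lt. lra. }
    assert (Hrat : d (S (S n)) = d n * (1 - / (INR n + 3))).
    { unfold d.
      replace (p_coef a (S (S n))) with (4 * a ^ 2 * p_coef a n / ((INR n + 1) * (INR n + 3)))
        by (rewrite <- p_coef_rec; field; lra).
      replace (fact (S (S n))) with (S (S n) * (S n * fact n))%nat by reflexivity.
      rewrite !mult_INR, !S_INR. cbn [pow].
      field. repeat split; try lra. apply pow_nonzero. lra. }
    rewrite Hrat. assert (0 < / (INR n + 3)) by (apply Rinv_0_lt_compat; lra). nra. }
  exists (Rmax (d 0%nat) (d 1%nat)). intros n.
  rewrite Rabs_pos_eq by apply Rlt_le, Hpos.
  replace (p_coef a n) with (d n * (2 * a) ^ n / INR (fact n))
    by (unfold d; field; split; [apply pow_nonzero; lra | apply INR_fact_neq_0]).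
  unfold Rdiv. apply Rmult_le_compat_r; [apply Rlt_le, Rinv_0_lt_compat, INR_fact_lt_0 |].
  apply Rmult_le_compat_r; [apply pow_le; lra | apply le_max_of_step2_nonincreasing, Hd].
Qed.

Lemma CV_radius_p_coef a x : 0 < a -> Rbar_lt (Rabs x) (CV_radius (p_coef a)).
Proof.
  intros Ha. destruct (p_coef_fact_bound a Ha) as [M HM].
  exact (CV_radius_infinite_of_fact_bound _ _ _ HM x).
Qed.

Section RootSeries.

Variable b : nat -> R.
Hypothesis b_radius : forall x, Rbar_lt (Rabs x) (CV_radius b).

Lemma CV_radius_derive_b x : Rbar_lt (Rabs x) (CV_radius (PS_derive b)).
Proof. rewrite CV_radius_derive. apply b_radius. Qed.

Lemma CV_radius_derive2_b x : Rbar_lt (Rabs x) (CV_radius (PS_derive (PS_derive b))).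
Proof. rewrite !CV_radius_derive. apply b_radius. Qed.

Definition root_series (v : R) : R := PSeries b (sqrt v) / sqrt v.
Definition root_series_d1 (v : R) : R :=
  (sqrt v * PSeries (PS_derive b) (sqrt v) - PSeries b (sqrt v)) / (2 * sqrt v ^ 3).
Definition root_series_d2 (v : R) : R :=
  (sqrt v ^ 2 * PSeries (PS_derive (PS_derive b)) (sqrt v)
   - 3 * sqrt v * PSeries (PS_derive b) (sqrt v) + 3 * PSeries b (sqrt v)) / (4 * sqrt v ^ 5).

Lemma Derive_PSeries_b x : Derive (fun y => PSeries b y) x = PSeries (PS_derive b) x.
Proof. apply Derive_PSeries, b_radius. Qed.

Lemma Derive_PSeries_derive_b x :
  Derive (fun y => PSeries (PS_derive b) y) x = PSeries (PS_derive (PS_derive b)) x.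
Proof. apply Derive_PSeries, CV_radius_derive_b. Qed.

Lemma is_derive_root_series v : 0 < v -> is_derive root_series v (root_series_d1 v).
Proof.
  intros Hv. assert (Hq : 0 < sqrt v) by apply sqrt_lt_R0, Hv.
  unfold root_series. auto_derive.
  - repeat split; try lra. apply ex_derive_PSeries, b_radius.
  - rewrite Derive_PSeries_b. unfold root_series_d1. field. lra.
Qed.

Lemma is_derive_root_series_d1 v : 0 < v -> is_derive root_series_d1 v (root_series_d2 v).
Proof.
  intros Hv. assert (Hq : 0 < sqrt v) by apply sqrt_lt_R0, Hv.
  unfold root_series_d1. auto_derive.
  - repeat split; try lra; try (apply Rgt_not_eq; repeat apply Rmult_lt_0_compat; lra).
    + apply ex_derive_PSeries, CV_radius_derive_b.
    + apply ex_derive_PSeries, b_radius.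
  - rewrite Derive_PSeries_b, Derive_PSeries_derive_b. unfold root_series_d2. field. lra.
Qed.

Variable C : R.
Hypothesis b_rec : forall k, (INR k + 1) * (INR k + 3) * b (S (S k)) = C * b k.

Lemma PSeries_ode r :
  r ^ 2 * PSeries (PS_derive (PS_derive b)) r + r * PSeries (PS_derive b) r - PSeries b r
  = C * r ^ 2 * PSeries b r - b 0%nat.
Proof.
  set (d1 := PS_derive b). set (d2 := PS_derive d1).
  set (S1 := PS_incr_1 (PS_incr_1 d2)). set (S2 := PS_incr_1 d1).
  set (S3 := @PS_incr_1 R_AbsRing R_NormedModule (PS_decr_1 b)).
  set (S4 := PS_scal C (@PS_incr_1 R_AbsRing R_NormedModule (PS_incr_1 b))).
  assert (Eb : ex_pseries b r) by apply CV_radius_inside, b_radius.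
  assert (E1 : ex_pseries S1 r)
    by apply ex_pseries_incr_1, ex_pseries_incr_1, CV_radius_inside, CV_radius_derive2_b.
  assert (E2 : ex_pseries S2 r) by apply ex_pseries_incr_1, CV_radius_inside, CV_radius_derive_b.
  assert (E3 : ex_pseries S3 r).
  { apply ex_pseries_incr_1, ex_pseries_decr_1; [| exact Eb].
    destruct (Req_dec r 0) as [-> | Hr]; [left; reflexivity | right].
    exists (/ r). unfold mult, one; simpl. field. exact Hr. }
  assert (E4 : ex_pseries S4 r).
  { apply ex_pseries_scal; [unfold mult; simpl; ring |].
    apply ex_pseries_incr_1, ex_pseries_incr_1, Eb. }
  (* the coefficients of [S1 + S2 - S3 - S4] vanish: this is the recurrence *)
  assert (H0 : PSeries (PS_minus (PS_minus (PS_plus S1 S2) S3) S4) r = 0).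
  { rewrite <- (PSeries_const_0 r). apply PSeries_ext. intros n.
    unfold PS_minus, PS_plus, S1, S2, S3, S4, PS_scal, PS_incr_1, d2, d1, PS_derive,
      PS_decr_1.
    unfold minus, plus, opp, scal, zero, mult; cbn -[INR pow].
    destruct n as [|[|m]]; cbn -[INR pow]; goal_in_R; unfold mult; cbn -[INR pow].
    - ring.
    - rewrite S_INR. simpl INR. ring.
    - rewrite <- b_rec, !S_INR. ring. }
  rewrite PSeries_minus, PSeries_minus, PSeries_plus in H0;
    [| auto | auto | apply ex_pseries_plus; auto | auto
     | apply ex_pseries_minus; [apply ex_pseries_plus|]; auto | auto].
  unfold S1, S2, S3, S4 in H0. rewrite PSeries_scal, !PSeries_incr_1 in H0.
  rewrite (PSeries_decr_1 b r Eb) in H0 |- *.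
  unfold minus, plus, opp in H0; simpl in H0. nra.
Qed.

Lemma root_series_ode v : 0 < v ->
  v * root_series_d2 v + 2 * root_series_d1 v = C / 4 * root_series v - b 0%nat / (4 * sqrt v ^ 3).
Proof.
  intros Hv. assert (Hq : 0 < sqrt v) by apply sqrt_lt_R0, Hv.
  assert (Ho := PSeries_ode (sqrt v)).
  replace v with (sqrt v ^ 2) at 1 by (rewrite pow2_sqrt; lra).
  unfold root_series, root_series_d1, root_series_d2.
  set (q := sqrt v) in *. clearbody q.
  replace (PSeries (PS_derive (PS_derive b)) q)
    with ((C * q ^ 2 * PSeries b q - b 0%nat - q * PSeries (PS_derive b) q + PSeries b q) / q ^ 2)
    by (rewrite <- Ho; field; lra).
  field. lra.
Qed.

End RootSeries.

(** * Derivatives of the density *)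

Lemma twice_derivable_of_loc (f g0 g1 : R -> R) (P : R -> Prop) x d2 :
  locally x P -> (forall s, P s -> f s = g0 s) -> (forall s, P s -> is_derive g0 s (g1 s)) ->
  is_derive g1 x d2 ->
  twice_derivable f x /\ Derive f x = g1 x /\ D2 f x = d2.
Proof.
  intros HP Hf Hg0 Hg1.
  assert (HDf : locally x (fun s => Derive f s = g1 s)).
  { generalize (locally_locally _ _ HP). apply filter_imp. intros s Hs.
    rewrite (Derive_ext_loc f g0); [apply is_derive_unique, Hg0, (locally_singleton _ _ Hs) |].
    generalize Hs. apply filter_imp. exact Hf. }
  assert (Hfx : is_derive f x (g1 x)).
  { apply (is_derive_ext_loc g0); [| apply Hg0, (locally_singleton _ _ HP)].
    generalize HP. apply filter_imp. intros y Hy. symmetry. apply Hf, Hy. }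
  assert (HDDf : is_derive (fun s => Derive f s) x d2).
  { apply (is_derive_ext_loc g1); [| exact Hg1].
    generalize HDf. apply filter_imp. intros y Hy. symmetry. exact Hy. }
  split; [split; eexists; eassumption |].
  split; [apply is_derive_unique, Hfx | apply is_derive_unique, HDDf].
Qed.

Lemma locally_pos_of_continuous (g : R -> R) x :
  continuous g x -> 0 < g x -> locally x (fun s => 0 < g s).
Proof.
  intros Hc Hg. apply Hc. exists (mkposreal (g x) Hg). intros y Hy.
  assert (H : Rabs (y - g x) < g x) by exact Hy. apply Rabs_lt_between in H. lra.
Qed.

(* [auto_derive] leaves terms [Derive (fun y => f y) x], which [is_derive_unique] (stated over
   [R_AbsRing]) does not match syntactically. *)
Lemma Derive_eta_of_is_derive (f : R -> R) x l : is_derive f x l -> Derive (fun y => f y) x = l.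
Proof. apply is_derive_unique. Qed.

Lemma mul_root_series_comp_derivatives (b : nat -> R) (f k k1 w w1 : R -> R) (P : R -> Prop)
  x k2 w2 :
  (forall r, Rbar_lt (Rabs r) (CV_radius b)) ->
  locally x P ->
  (forall s, P s -> f s = k s * root_series b (w s)) ->
  (forall s, P s -> 0 < w s /\ is_derive k s (k1 s) /\ is_derive w s (w1 s)) ->
  is_derive k1 x k2 -> is_derive w1 x w2 ->
  twice_derivable f x /\
  Derive f x = k1 x * root_series b (w x) + k x * (root_series_d1 b (w x) * w1 x) /\
  D2 f x = k2 * root_series b (w x) + 2 * k1 x * (root_series_d1 b (w x) * w1 x)
           + k x * (root_series_d2 b (w x) * w1 x ^ 2 + root_series_d1 b (w x) * w2).
Proof.
  intros Hb HP Hf Hkw Hk1 Hw1.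
  apply (twice_derivable_of_loc f (fun s => k s * root_series b (w s))
           (fun s => k1 s * root_series b (w s) + k s * (root_series_d1 b (w s) * w1 s)) P);
    [exact HP | exact Hf | |].
  - intros s Hs. destruct (Hkw s Hs) as [Hws [Hks Hws']].
    assert (Hr := is_derive_root_series b Hb _ Hws).
    auto_derive; [repeat split; eexists; eassumption |].
    rewrite (Derive_eta_of_is_derive _ _ _ Hks), (Derive_eta_of_is_derive _ _ _ Hws'),
      (Derive_eta_of_is_derive _ _ _ Hr). ring.
  - destruct (Hkw x (locally_singleton _ _ HP)) as [Hwx [Hkx Hwx']].
    assert (Hr := is_derive_root_series b Hb _ Hwx).
    assert (Hr1 := is_derive_root_series_d1 b Hb _ Hwx).
    auto_derive; [repeat split; eexists; eassumption |].
    rewrite (Derive_eta_of_is_derive _ _ _ Hkx), (Derive_eta_of_is_derive _ _ _ Hwx'),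
      (Derive_eta_of_is_derive _ _ _ Hk1), (Derive_eta_of_is_derive _ _ _ Hw1),
      (Derive_eta_of_is_derive _ _ _ Hr),
      (Derive_eta_of_is_derive _ _ _ Hr1). ring.
Qed.

Definition p_scale (c lam : R) : R := lam / (2 * c).
Definition time_factor (c lam t : R) : R := p_scale c lam / (PI * (exp (lam * t) - 1)).

Lemma p_dens_radial c lam y1 y2 y3 t v :
  v = y1 ^ 2 + y2 ^ 2 + y3 ^ 2 -> 0 < c ^ 2 * t ^ 2 - v ->
  p_dens c lam y1 y2 y3 t
  = time_factor c lam t * root_series (p_coef (p_scale c lam)) (c ^ 2 * t ^ 2 - v).
Proof.
  intros -> Hw. unfold p_dens, norm3, time_factor, root_series.
  rewrite pow2_sqrt by nra. fold (p_scale c lam).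
  set (q := sqrt (c ^ 2 * t ^ 2 - (y1 ^ 2 + y2 ^ 2 + y3 ^ 2))).
  assert (Hq : 0 < q) by apply sqrt_lt_R0, Hw.
  rewrite (Series_ext _ (fun k => / q * (p_coef (p_scale c lam) k * q ^ k))).
  - rewrite Series_scal_l. unfold PSeries, p_scale. unfold Rdiv. ring.
  - intros k. rewrite Gamma_half_int.
    replace ((INR k + 3) / 2) with ((INR (S (S k)) + 1) / 2) by (rewrite !S_INR; field).
    rewrite Gamma_half_int.
    replace (INR k - 1) with (INR k + - (1)) by ring.
    rewrite Rpower_plus, Rpower_Ropp, Rpower_1, Rpower_pow by lra.
    unfold p_coef. generalize (gamma_half_int_pos k) (gamma_half_int_pos (S (S k))).
    intros. field. lra.
Qed.

Lemma coef3_radial c lam y1 y2 y3 t :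
  exp (lam * t) - 1 <> 0 -> 0 < c ^ 2 * t ^ 2 - (y1 ^ 2 + y2 ^ 2 + y3 ^ 2) ->
  coef3 c lam y1 y2 y3 t = - lam ^ 2
    / (2 * PI ^ 2 * (exp (lam * t) - 1) * sqrt (c ^ 2 * t ^ 2 - (y1 ^ 2 + y2 ^ 2 + y3 ^ 2)) ^ 3).
Proof.
  intros He Hw. unfold coef3, norm3. rewrite pow2_sqrt by nra.
  set (w := c ^ 2 * t ^ 2 - (y1 ^ 2 + y2 ^ 2 + y3 ^ 2)) in *.
  assert (Hq : 0 < sqrt w) by apply sqrt_lt_R0, Hw.
  assert (HPI := PI_RGT_0).
  assert (HP : 0 < sqrt PI) by apply sqrt_lt_R0, HPI.
  assert (HP2 : sqrt PI * sqrt PI = PI) by (apply sqrt_sqrt; lra).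
  assert (Hw2 : sqrt w * sqrt w = w) by (apply sqrt_sqrt; lra).
  assert (HP3 : sqrt (PI ^ 3) = PI * sqrt PI).
  { rewrite <- (sqrt_square (PI * sqrt PI)) by nra.
    f_equal. replace (PI * sqrt PI * (PI * sqrt PI)) with (PI * PI * (sqrt PI * sqrt PI)) by ring.
    rewrite HP2. ring. }
  replace (- (3 / 2)) with (- (1 + / 2)) by field.
  rewrite Gamma_neg_half, Rpower_Ropp, Rpower_plus, Rpower_1, Rpower_sqrt, HP3 by lra.
  replace (PI ^ 2) with (PI * (sqrt PI * sqrt PI)) by (rewrite HP2; ring).
  replace (sqrt w ^ 3) with (w * sqrt w)
    by (transitivity (sqrt w * sqrt w * sqrt w); [rewrite Hw2; reflexivity | ring]).
  field. repeat split; lra.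
Qed.

Section TelegraphSections.

Variables c lam : R.
Hypothesis hc : 0 < c.
Hypothesis hlam : 0 < lam.

Local Notation b := (p_coef (p_scale c lam)).

Lemma CV_radius_b x : Rbar_lt (Rabs x) (CV_radius b).
Proof. apply CV_radius_p_coef. unfold p_scale. apply Rdiv_lt_0_compat; lra. Qed.

Lemma exp_lam_sub1_pos s : 0 < s -> 0 < exp (lam * s) - 1.
Proof.
  intros Hs. assert (1 < exp (lam * s)) by (rewrite <- exp_0; apply exp_increasing; nra). lra.
Qed.

Lemma p_dens_time_section y1 y2 y3 t v :
  0 < t -> v = y1 ^ 2 + y2 ^ 2 + y3 ^ 2 -> 0 < c ^ 2 * t ^ 2 - v ->
  twice_derivable (fun s => p_dens c lam y1 y2 y3 s) t /\
  Derive (fun s => p_dens c lam y1 y2 y3 s) t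
  = time_factor c lam t
    * (- lam * exp (lam * t) / (exp (lam * t) - 1) * root_series b (c ^ 2 * t ^ 2 - v)
       + root_series_d1 b (c ^ 2 * t ^ 2 - v) * (2 * c ^ 2 * t)) /\
  D2 (fun s => p_dens c lam y1 y2 y3 s) t
  = time_factor c lam t
    * (lam ^ 2 * exp (lam * t) * (exp (lam * t) + 1) / (exp (lam * t) - 1) ^ 2
         * root_series b (c ^ 2 * t ^ 2 - v)
       - 2 * lam * exp (lam * t) / (exp (lam * t) - 1)
         * (root_series_d1 b (c ^ 2 * t ^ 2 - v) * (2 * c ^ 2 * t))
       + (root_series_d2 b (c ^ 2 * t ^ 2 - v) * (2 * c ^ 2 * t) ^ 2
          + root_series_d1 b (c ^ 2 * t ^ 2 - v) * (2 * c ^ 2))).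
Proof.
  intros Ht Hv Hw.
  assert (HPI := PI_RGT_0).
  set (k1 := fun s => - lam * exp (lam * s) / (exp (lam * s) - 1) * time_factor c lam s).
  destruct (mul_root_series_comp_derivatives b (fun s => p_dens c lam y1 y2 y3 s)
              (time_factor c lam) k1 (fun s => c ^ 2 * s ^ 2 - v) (fun s => 2 * c ^ 2 * s)
              (fun s => 0 < s /\ 0 < c ^ 2 * s ^ 2 - v) t
              (lam ^ 2 * exp (lam * t) * (exp (lam * t) + 1) / (exp (lam * t) - 1) ^ 2
               * time_factor c lam t) (2 * c ^ 2))
    as [HT [HD HD2]].
  - exact CV_radius_b.
  - apply filter_and; [apply (locally_pos_of_continuous (fun s => s)) |
                       apply (locally_pos_of_continuous (fun s => c ^ 2 * s ^ 2 - v))];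
      try assumption; apply continuous_of_ex_derive; auto_derive; easy.
  - intros s [Hs Hws]. apply p_dens_radial; assumption.
  - intros s [Hs Hws]. assert (He := exp_lam_sub1_pos s Hs).
    split; [exact Hws |]. split.
    + unfold k1, time_factor. auto_derive; [nra | field; lra].
    + auto_derive; [easy | ring].
  - assert (He := exp_lam_sub1_pos t Ht). unfold k1, time_factor. auto_derive.
    + repeat split; try apply Rmult_integral_contrapositive_currified; lra.
    + field; lra.
  - auto_derive; [easy | ring].
  - assert (He := exp_lam_sub1_pos t Ht).
    split; [exact HT |]. rewrite HD, HD2. unfold k1. split; field; lra.
Qed.

Lemma p_dens_space_section (f : R -> R) t rho x v :
  v = x ^ 2 + rho -> 0 < c ^ 2 * t ^ 2 - v ->
  (forall s, 0 < c ^ 2 * t ^ 2 - (s ^ 2 + rho) ->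
     f s = time_factor c lam t * root_series b (c ^ 2 * t ^ 2 - (s ^ 2 + rho))) ->
  twice_derivable f x /\
  D2 f x = time_factor c lam t
           * (root_series_d2 b (c ^ 2 * t ^ 2 - v) * (4 * x ^ 2)
              - 2 * root_series_d1 b (c ^ 2 * t ^ 2 - v)).
Proof.
  intros -> Hw Hf.
  destruct (mul_root_series_comp_derivatives b f (fun _ => time_factor c lam t) (fun _ => 0)
              (fun s => c ^ 2 * t ^ 2 - (s ^ 2 + rho)) (fun s => - 2 * s)
              (fun s => 0 < c ^ 2 * t ^ 2 - (s ^ 2 + rho)) x 0 (-2))
    as [HT [_ HD2]].
  - exact CV_radius_b.
  - apply (locally_pos_of_continuous (fun s => c ^ 2 * t ^ 2 - (s ^ 2 + rho))); [| exact Hw].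
    apply continuous_of_ex_derive. auto_derive. easy.
  - exact Hf.
  - intros s Hs. split; [exact Hs |].
    split; [apply (is_derive_const (V := R_NormedModule)) | auto_derive; [easy | ring]].
  - apply (is_derive_const (V := R_NormedModule)).
  - auto_derive; [easy | ring].
  - split; [exact HT |]. rewrite HD2. ring.
Qed.

Lemma p_dens_laplacian y1 y2 y3 t :
  0 < c ^ 2 * t ^ 2 - (y1 ^ 2 + y2 ^ 2 + y3 ^ 2) ->
  twice_derivable (fun s => p_dens c lam s y2 y3 t) y1 /\
  twice_derivable (fun s => p_dens c lam y1 s y3 t) y2 /\
  twice_derivable (fun s => p_dens c lam y1 y2 s t) y3 /\
  D2 (fun s => p_dens c lam s y2 y3 t) y1 + D2 (fun s => p_dens c lam y1 s y3 t) y2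
    + D2 (fun s => p_dens c lam y1 y2 s t) y3
  = time_factor c lam t
    * (4 * (y1 ^ 2 + y2 ^ 2 + y3 ^ 2)
         * root_series_d2 b (c ^ 2 * t ^ 2 - (y1 ^ 2 + y2 ^ 2 + y3 ^ 2))
       - 6 * root_series_d1 b (c ^ 2 * t ^ 2 - (y1 ^ 2 + y2 ^ 2 + y3 ^ 2))).
Proof.
  intros Hw.
  destruct (p_dens_space_section (fun s => p_dens c lam s y2 y3 t) t (y2 ^ 2 + y3 ^ 2) y1
              (y1 ^ 2 + y2 ^ 2 + y3 ^ 2) ltac:(ring) Hw) as [T1 D21].
  { intros s Hs. apply p_dens_radial; [ring | exact Hs]. }
  destruct (p_dens_space_section (fun s => p_dens c lam y1 s y3 t) t (y1 ^ 2 + y3 ^ 2) y2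
              (y1 ^ 2 + y2 ^ 2 + y3 ^ 2) ltac:(ring) Hw) as [T2 D22].
  { intros s Hs. apply p_dens_radial; [ring | exact Hs]. }
  destruct (p_dens_space_section (fun s => p_dens c lam y1 y2 s t) t (y1 ^ 2 + y2 ^ 2) y3
              (y1 ^ 2 + y2 ^ 2 + y3 ^ 2) ltac:(ring) Hw) as [T3 D23].
  { intros s Hs. apply p_dens_radial; [ring | exact Hs]. }
  refine (conj T1 (conj T2 (conj T3 _))).
  rewrite D21, D22, D23. ring.
Qed.

End TelegraphSections.

Theorem theorem3p5 (c lam : R) (hc : 0 < c) (hlam : 0 < lam) :
  forall (y1 y2 y3 t : R), 0 < t -> norm3 y1 y2 y3 < c * t ->
    let u := p_dens c lam in
    twice_derivable (fun s => u y1 y2 y3 s) t /\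
    twice_derivable (fun s => u s y2 y3 t) y1 /\
    twice_derivable (fun s => u y1 s y3 t) y2 /\
    twice_derivable (fun s => u y1 y2 s t) y3 /\
    D2 (fun s => u y1 y2 y3 s) t
      + coef1 lam t * Derive (fun s => u y1 y2 y3 s) t
      - c ^ 2 * (D2 (fun s => u s y2 y3 t) y1
                 + D2 (fun s => u y1 s y3 t) y2
                 + D2 (fun s => u y1 y2 s t) y3)
    = coef2 lam t * u y1 y2 y3 t + coef3 c lam y1 y2 y3 t.
Proof.
  intros y1 y2 y3 t Ht Hn u.
  assert (Hw : 0 < c ^ 2 * t ^ 2 - (y1 ^ 2 + y2 ^ 2 + y3 ^ 2)).
  { assert (Hn2 : norm3 y1 y2 y3 ^ 2 = y1 ^ 2 + y2 ^ 2 + y3 ^ 2) by (apply pow2_sqrt; nra).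
    assert (0 <= norm3 y1 y2 y3) by apply sqrt_pos. nra. }
  destruct (p_dens_time_section c lam hc hlam y1 y2 y3 t _ Ht eq_refl Hw) as [Tt [Dt D2t]].
  destruct (p_dens_laplacian c lam hc hlam y1 y2 y3 t Hw) as [T1 [T2 [T3 HL]]].
  refine (conj Tt (conj T1 (conj T2 (conj T3 _)))).
  assert (He := exp_lam_sub1_pos lam hlam t Ht).
  unfold u. rewrite D2t, Dt, HL, (p_dens_radial c lam y1 y2 y3 t _ eq_refl Hw),
    coef3_radial by lra.
  set (w := c ^ 2 * t ^ 2 - (y1 ^ 2 + y2 ^ 2 + y3 ^ 2)) in *.
  set (a := p_scale c lam).
  assert (Hq : 0 < sqrt w) by apply sqrt_lt_R0, Hw.
  assert (Hode := root_series_ode (p_coef a) (CV_radius_b c lam hc hlam) _ (p_coef_rec a) w Hw).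
  rewrite p_coef_0 in Hode.
  replace (root_series_d2 (p_coef a) w)
    with ((4 * a ^ 2 / 4 * root_series (p_coef a) w - 2 * a / PI / (4 * sqrt w ^ 3)
           - 2 * root_series_d1 (p_coef a) w) / w) by (rewrite <- Hode; field; lra).
  assert (HPI := PI_RGT_0).
  unfold coef1, coef2, time_factor, a, p_scale, w in *. field.
  repeat split; nra.
Qed.
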